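(* Let $X$ be a Wright--Fisher diffusion on $\Delta_{d-1}=\{x\in[0,1]^d:\sum_i x_i=1\}$ with diffusion coefficient $V_{ij}(x)=x_i(\delta_{ij}-x_j)$ and drift $\mu(x;\varphi)=c(x)+Z(x)\varphi$, where $\varphi\in\mathbb R^r$, $Z(x)$ is a $d\times r$ matrix not depending on $\varphi$ with $a_i(x;\varphi)=\sum_{k=1}^r Z_{ik}(x)\varphi_k$, and $\sum_{i=1}^d c_i(x)=\sum_{i=1}^d Z_{ik}(x)=0$ for all $k$. Call the estimation of $\varphi$ robust to $c$ if the quantity $$\varphi^\top Z^*(x)^\top V^*(x)^{-1}c^*(x)$$ does not depend on $\varphi$, where $Z^*,c^*$ denote the first $d-1$ rows of $Z,c$ and $V^*(x)$ is the upper-left $(d-1)\times(d-1)$ block of $V(x)$ (so $[V^*(x)^{-1}]_{ij}=x_d^{-1}+x_i^{-1}\delta_{ij}$). Then the estimation is robust to $c$ if and only if $$\sum_{i=1}^d\frac{1}{x_i}\frac{\partial a_i}{\partial\varphi_k}(x)\,c_i(x)=0\qquad\text{for each }k=1,\dots,r.$$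
   Context: The estimator in question is $\hat\varphi=\big[\int_0^T Z(X(t))^\top\mathrm{diag}(X(t))^{-1}Z(X(t))\,dt\big]^{-1}Y$ with $Y_k=\int_0^T\sum_{i=1}^d\frac{Z_{ik}(X(t))}{X_i(t)}d\widetilde X_i(t)$ and $\widetilde X(t)=X(t)-\int_0^tc(X(s))ds$; the term $c$ represents a known (possibly confounding) drift contribution and robustness means, as defined in the claim, that $c$ does not enter the $\varphi$-dependent part of the likelihood via the cross term. *)

From mathcomp Require Import all_boot all_order all_algebra.
Set Implicit Arguments. Unset Strict Implicit. Unset Printing Implicit Defensive.
Import Order.TTheory GRing.Theory Num.Theory.
Local Open Scope ring_scope.

(* Dimension convention: d = n.+1 coordinates, indices 'I_n.+1; the last index
   ord_max plays the role of coordinate d.  The "first d-1" indices are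
   widen_ord (leqnSn n) i for i : 'I_n. *)

Definition first (n : nat) (i : 'I_n) : 'I_n.+1 := widen_ord (leqnSn n) i.

Definition in_simplex (R : realFieldType) (n : nat) (x : 'I_n.+1 -> R) : Prop :=
  (forall i, 0 <= x i) /\ \sum_i x i = 1.

Definition in_interior (R : realFieldType) (n : nat) (x : 'I_n.+1 -> R) : Prop :=
  (forall i, 0 < x i) /\ \sum_i x i = 1.

Definition WF_V (R : realFieldType) (n : nat) (x : 'I_n.+1 -> R) : 'M[R]_n.+1 :=
  \matrix_(i, j) (x i * ((i == j)%:R - x j)).

Definition Vstar (R : realFieldType) (n : nat) (x : 'I_n.+1 -> R) : 'M[R]_n :=
  \matrix_(i, j) WF_V x (first i) (first j).

Definition Zstar (R : realFieldType) (n r : nat) (Zx : 'M[R]_(n.+1, r)) : 'M[R]_(n, r) :=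
  \matrix_(i, k) Zx (first i) k.

Definition cstar (R : realFieldType) (n : nat) (cx : 'cV[R]_n.+1) : 'cV[R]_n :=
  \col_i cx (first i) 0.

Definition cross_term (R : realFieldType) (n r : nat)
  (Z : ('I_n.+1 -> R) -> 'M[R]_(n.+1, r)) (c : ('I_n.+1 -> R) -> 'cV[R]_n.+1)
  (x : 'I_n.+1 -> R) (phi : 'cV[R]_r) : R :=
  ((phi^T *m (Zstar (Z x))^T *m invmx (Vstar x) *m cstar (c x)) 0 0).

Definition robust_to_c (R : realFieldType) (n r : nat)
  (Z : ('I_n.+1 -> R) -> 'M[R]_(n.+1, r)) (c : ('I_n.+1 -> R) -> 'cV[R]_n.+1) : Prop :=
  forall x, in_interior x ->
    forall phi phi' : 'cV[R]_r, cross_term Z c x phi = cross_term Z c x phi'.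

(* On the interior of the simplex, V*(x)^{-1} = x_d^{-1} 1 1^T + diag(x_1^{-1}, ..., x_{d-1}^{-1}).
   For vectors u, v whose coordinates sum to zero, the rank-one part contributes
   x_d^{-1} (-u_d) (-v_d), which is exactly the missing d-th term of the diagonal part, so
   u*^T V*^{-1} v* = sum_i u_i v_i / x_i.  Hence the cross term equals phi^T w(x) with
   w_k(x) = sum_i Z_ik(x) c_i(x) / x_i, and a linear form in phi is constant iff it vanishes. *)
From mathcomp Require Import all_boot all_order all_algebra.
From mathcomp Require Import ring.
Set Implicit Arguments. Unset Strict Implicit. Unset Printing Implicit Defensive.
Import Order.TTheory GRing.Theory Num.Theory.
Local Open Scope ring_scope.

Lemma first_eq n (i j : 'I_n) : (first i == first j) = (i == j).
Proof. by apply: inj_eq => a b /(congr1 val) /= /val_inj. Qed.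

Lemma sum_first (V : zmodType) n (F : 'I_n.+1 -> V) :
  \sum_(i < n) F (first i) = \sum_i F i - F ord_max.
Proof. by rewrite big_ord_recr addrK. Qed.

Lemma sum_first_eq0 (V : zmodType) n (F : 'I_n.+1 -> V) :
  \sum_i F i = 0 -> \sum_(i < n) F (first i) = - F ord_max.
Proof. by rewrite sum_first => ->; rewrite sub0r. Qed.

Lemma interior_in_simplex (R : realFieldType) n (x : 'I_n.+1 -> R) :
  in_interior x -> in_simplex x.
Proof. by case=> x_gt0 x_sum; split=> // i; exact: ltW. Qed.

Lemma trmx_mulmx_const_eq0 (R : pzRingType) r (w : 'cV[R]_r) :
  (forall u u' : 'cV[R]_r, (u^T *m w) 0 0 = (u'^T *m w) 0 0) <-> w = 0.
Proof.
split=> [w_const | ->]; last by move=> u u'; rewrite !mulmx0.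
apply/colP=> k; have := w_const (delta_mx k 0) 0.
by rewrite trmx_delta -rowE trmx0 mul0mx !mxE.
Qed.

Section VstarInverse.

Variables (R : realFieldType) (n : nat) (x : 'I_n.+1 -> R).
Hypothesis x_interior : in_interior x.

Definition Vstar_inv : 'M[R]_n :=
  const_mx (x ord_max)^-1 + diag_mx (\row_j (x (first j))^-1).

Lemma sum_row_Vstar i : \sum_j Vstar x i j = x (first i) * x ord_max.
Proof.
case: x_interior => _ x_sum.
under eq_bigr do rewrite !mxE first_eq.
rewrite -mulr_sumr sumrB sum_first x_sum.
rewrite (bigD1 i) //= eqxx big1 => [|j]; last by rewrite eq_sym => /negPf->.
by rewrite addr0 opprB addrC subrK.
Qed.

Lemma mulmx_Vstar_inv : Vstar x *m Vstar_inv = 1%:M.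
Proof.
case: x_interior => x_gt0 _.
apply/matrixP=> i l; rewrite mulmxDr mul_mx_diag !mxE.
under eq_bigr do rewrite [const_mx _ _ _]mxE.
rewrite -mulr_suml sum_row_Vstar first_eq.
have := x_gt0 ord_max; have := x_gt0 (first l).
by case: eqVneq => [->|_] /= xl_gt0 xd_gt0; field; rewrite !gt_eqF.
Qed.

Lemma invmx_Vstar : invmx (Vstar x) = Vstar_inv.
Proof.
have [Vstar_unit _] := mulmx1_unit mulmx_Vstar_inv.
by rewrite -[RHS](mulKmx Vstar_unit) mulmx_Vstar_inv mulmx1.
Qed.

Lemma Zstar_invmx_Vstar_cstar r (U : 'M[R]_(n.+1, r)) (v : 'cV[R]_n.+1) :
  (forall k, \sum_i U i k = 0) -> \sum_i v i 0 = 0 ->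
  (Zstar U)^T *m invmx (Vstar x) *m cstar v =
  \col_k \sum_i (x i)^-1 * U i k * v i 0.
Proof.
move=> U_sum v_sum; rewrite invmx_Vstar.
apply/colP=> k; rewrite mulmxDr mulmxDl mul_mx_diag !mxE.
under eq_bigr do rewrite !mxE big_distrl /=.
under [X in _ + X]eq_bigr do rewrite !mxE.
under eq_bigr do under eq_bigr do rewrite !mxE.
under eq_bigr do rewrite -!mulr_suml (@sum_first_eq0 _ _ (U^~ k)) //.
rewrite -mulr_sumr (@sum_first_eq0 _ _ (v^~ 0)) // [RHS]big_ord_recr /= addrC.
by congr (_ + _); [apply: eq_bigr => j _ |]; ring.
Qed.

End VstarInverse.

Theorem proposition2 (R : realFieldType) (n r : nat)
  (Z : ('I_n.+1 -> R) -> 'M[R]_(n.+1, r)) (c : ('I_n.+1 -> R) -> 'cV[R]_n.+1) :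
  (0 < n)%N ->
  (forall x, in_simplex x -> \sum_i c x i 0 = 0) ->
  (forall x, in_simplex x -> forall k, \sum_i Z x i k = 0) ->
  robust_to_c Z c <->
  (forall x, in_interior x -> forall k : 'I_r,
     \sum_i (x i)^-1 * Z x i k * c x i 0 = 0).
Proof.
move=> _ c_sum Z_sum.
pose w x : 'cV[R]_r := \col_k \sum_i (x i)^-1 * Z x i k * c x i 0.
have cross_termE x phi : in_interior x -> cross_term Z c x phi = (phi^T *m w x) 0 0.
  move=> x_int; have x_simplex := interior_in_simplex x_int.
  rewrite /cross_term /w -(Zstar_invmx_Vstar_cstar x_int) ?mulmxA //.
  - exact: Z_sum.
  - exact: c_sum.
split=> [robust x x_int k | w_eq0 x x_int phi phi'].
- have /colP/(_ k) : w x = 0.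
    by apply/trmx_mulmx_const_eq0 => u u'; rewrite -!cross_termE //; exact: robust.
  by rewrite !mxE.
- rewrite !cross_termE //; apply: (trmx_mulmx_const_eq0 (w x)).2.
  by apply/colP=> k; rewrite !mxE w_eq0.
Qed.
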